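(* Let $\mathbf A\in\mathbb R^{m\times n}$ with $0<m<n$ and suppose there is $\Delta>0$ such that $\|\mathbf h\|_1\ge\sqrt{m/\Delta}\,\|\mathbf h\|_2$ for all nonzero $\mathbf h\in\mathrm{Null}(\mathbf A)$. Let $\mathbf x^0\in\mathbb R^n$ be arbitrary, $\mathcal S$ the set of indices of its $k$ largest components in magnitude, $\mathcal Z=\{1,\dots,n\}\setminus\mathcal S$, and let $\alpha>\|\mathbf x^0_{\mathcal Z}\|_\infty$. Define $C_3:=\frac{\alpha+\|\mathbf x^0_{\mathcal S}\|_\infty}{\alpha-\|\mathbf x^0_{\mathcal Z}\|_\infty}$ and $C_4:=\frac{2\alpha}{\alpha-\|\mathbf x^0_{\mathcal Z}\|_\infty}$. If $m\ge 4(1+C_3)^2k\Delta$, then the solution $\mathbf x^*$ of problem (P2) with $\mathbf b=\mathbf A\mathbf x^0$ satisfies $$\|\mathbf x^*-\mathbf x^0\|_1\le 4C_4\|\mathbf x^0_{\mathcal Z}\|_1.$$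
   Context: Problem (P2) is $\min_{\mathbf x}\{\|\mathbf x\|_1+\frac{1}{2\alpha}\|\mathbf x\|_2^2:\ \mathbf A\mathbf x=\mathbf b\}$. $\mathbf x_{\mathcal S}$ is the restriction of $\mathbf x$ to coordinates in $\mathcal S$. *)

From HB Require Import structures.
From mathcomp Require Import all_boot all_order all_algebra.
Set Implicit Arguments. Unset Strict Implicit. Unset Printing Implicit Defensive.
Import Order.TTheory GRing.Theory Num.Theory.
Local Open Scope ring_scope.

Definition norm1 (R : realDomainType) (n : nat) (x : 'cV[R]_n) : R :=
  \sum_(i < n) `|x i 0|.

Definition norm2 (R : rcfType) (n : nat) (x : 'cV[R]_n) : R :=
  Num.sqrt (\sum_(i < n) (x i 0) ^+ 2).

Definition normInf (R : realDomainType) (n : nat) (x : 'cV[R]_n) : R :=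
  \big[Num.max/0]_(i < n) `|x i 0|.

(* x_S : restriction of x to the coordinates in S (other coordinates set to 0;
   all norms coincide with those of the subvector indexed by S). *)
Definition restrict (R : ringType) (n : nat) (S : {set 'I_n}) (x : 'cV[R]_n)
  : 'cV[R]_n := \col_i (if i \in S then x i 0 else 0).

Definition largest_k_support (R : realDomainType) (n k : nat)
  (x : 'cV[R]_n) (S : {set 'I_n}) : Prop :=
  #|S| = k /\ forall i j, i \in S -> j \notin S -> `|x j 0| <= `|x i 0|.

Definition P2_obj (R : rcfType) (n : nat) (alpha : R) (x : 'cV[R]_n) : R :=
  norm1 x + (2 * alpha)^-1 * (norm2 x) ^+ 2.

Definition is_P2_solution (R : rcfType) (m n : nat) (A : 'M[R]_(m, n))
  (b : 'cV[R]_m) (alpha : R) (x : 'cV[R]_n) : Prop :=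
  A *m x = b /\ forall y : 'cV[R]_n, A *m y = b -> P2_obj alpha x <= P2_obj alpha y.

From HB Require Import structures.
From mathcomp Require Import all_boot all_order all_algebra.
From mathcomp Require Import ring lra.
Import Order.TTheory GRing.Theory Num.Theory.
Local Open Scope ring_scope.

(* Write h := x* - x0, split the l1 norm of h over S and its complement Z,
   and let s := ||x0_S||_oo and a := ||x0_Z||_oo.  Two facts combine:

   - Cone constraint (from optimality alone).  Multiplying the objective by
     2 alpha turns it into a sum of per-coordinate costs
     2 alpha |t| + t^2; comparing x* with the feasible point x0 coordinate by
     coordinate yields
        (alpha - a) ||h_Z||_1 <= (alpha + s) ||h_S||_1 + 2 alpha ||x0_Z||_1,
     i.e. ||h_Z||_1 <= C3 ||h_S||_1 + C4 ||x0_Z||_1.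
   - Null-space property.  Since A h = 0, Cauchy-Schwarz on S gives
     (m / Delta) ||h_S||_1^2 <= k ||h||_1^2, and with m >= 4 (1+C3)^2 k Delta
     this yields 2 (1 + C3) ||h_S||_1 <= ||h||_1.

   Adding ||h_S||_1 to the cone constraint then gives
   ||h||_1 <= (1+C3) ||h_S||_1 + C4 ||x0_Z||_1 <= ||h||_1 / 2 + C4 ||x0_Z||_1,
   hence ||h||_1 <= 2 C4 ||x0_Z||_1, which is sharper than the claimed bound. *)

Lemma sum_sqr_le_card {R : realFieldType} {I : finType} (P : {set I}) (a : I -> R) :
  (\sum_(i in P) a i) ^+ 2 <= #|P|%:R * \sum_(i in P) a i ^+ 2.
Proof.
have pair_bound : 2 * (\sum_(i in P) a i) ^+ 2 <=
    \sum_(i in P) \sum_(j in P) (a i ^+ 2 + a j ^+ 2).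
  rewrite expr2 big_distrl /= mulr_sumr; apply: ler_sum => i _.
  rewrite big_distrr /= mulr_sumr; apply: ler_sum => j _.
  have -> : a i ^+ 2 + a j ^+ 2 = (a i - a j) ^+ 2 + 2 * (a i * a j) by ring.
  by rewrite lerDr sqr_ge0.
have double_sum : \sum_(i in P) \sum_(j in P) (a i ^+ 2 + a j ^+ 2) =
    2 * (#|P|%:R * \sum_(i in P) a i ^+ 2).
  under eq_bigr => i _ do rewrite big_split /= sumr_const.
  by rewrite big_split /= sumr_const sumrMnl -mulr_natl; ring.
by rewrite -(ler_pM2l (_ : 0 < 2 :> R)) // -double_sum.
Qed.

Lemma sum_setC_split {R : nmodType} {I : finType} (S : {set I}) (F : I -> R) :
  \sum_i F i = \sum_(i in S) F i + \sum_(i in ~: S) F i.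
Proof.
rewrite (bigID (mem S)) /=; congr (_ + _).
by apply: eq_bigl => i; rewrite inE.
Qed.

Section Norms.
Context {R : rcfType} {n : nat}.
Implicit Types (x : 'cV[R]_n) (S : {set 'I_n}).

Lemma normInf_ge0 x : 0 <= normInf x.
Proof. by rewrite /normInf; elim/big_ind: _ => // p q hp hq; rewrite le_max hp. Qed.

Lemma restrict_coord_le S x i : i \in S -> `|x i 0| <= normInf (restrict S x).
Proof.
move=> iS; have := le_bigmax 0 (fun j => `|restrict S x j 0|) i.
by rewrite mxE iS.
Qed.

Lemma norm1_restrict S x : norm1 (restrict S x) = \sum_(i in S) `|x i 0|.
Proof.
rewrite /norm1 [RHS]big_mkcond /=; apply: eq_bigr => i _.
by rewrite mxE; case: ifP; rewrite ?normr0.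
Qed.

Lemma norm1_split S x : norm1 x = norm1 (restrict S x) + norm1 (restrict (~: S) x).
Proof. by rewrite !norm1_restrict [LHS](sum_setC_split S). Qed.

Lemma norm2_sqr x : norm2 x ^+ 2 = \sum_i x i 0 ^+ 2.
Proof. by rewrite sqr_sqrtr // sumr_ge0 // => i _; apply: sqr_ge0. Qed.

Lemma norm1_restrict_sqr_le S x : norm1 (restrict S x) ^+ 2 <= #|S|%:R * norm2 x ^+ 2.
Proof.
rewrite norm1_restrict; apply: le_trans (sum_sqr_le_card S _) _.
have sqr_norm i : `|x i 0| ^+ 2 = x i 0 ^+ 2 by rewrite real_normK ?num_real.
under eq_bigr => i _ do rewrite sqr_norm.
rewrite norm2_sqr ler_wpM2l // (sum_setC_split S (fun i => x i 0 ^+ 2)) lerDl.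
by rewrite sumr_ge0 // => i _; apply: sqr_ge0.
Qed.

Lemma null_space_support_bound (c : R) S x :
  0 <= c -> (x != 0 -> Num.sqrt c * norm2 x <= norm1 x) ->
  c * norm1 (restrict S x) ^+ 2 <= #|S|%:R * norm1 x ^+ 2.
Proof.
move=> c0 nsp.
have l2_le_l1 : c * norm2 x ^+ 2 <= norm1 x ^+ 2.
  have [->|x_neq0] := eqVneq x 0.
    rewrite norm2_sqr big1 ?mulr0 ?sqr_ge0 // => i _.
    by rewrite mxE expr0n.
  have norm1_ge0 : 0 <= norm1 x by rewrite sumr_ge0.
  have := nsp x_neq0; rewrite -ler_sqr ?nnegrE ?mulr_ge0 ?sqrtr_ge0 //.
  by rewrite exprMn sqr_sqrtr.
apply: le_trans (ler_wpM2l c0 (norm1_restrict_sqr_le S x)) _.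
by rewrite mulrCA ler_wpM2l.
Qed.

End Norms.

(* The objective of (P2), scaled by 2 alpha, is a sum of per-coordinate
   costs 2 alpha |t| + t^2. *)
Definition coord_cost {R : realDomainType} (alpha t : R) : R :=
  2 * alpha * `|t| + t ^+ 2.

Lemma coord_cost_gap_support (R : realFieldType) (alpha s u v : R) :
  0 < alpha -> `|u| <= s ->
  - (2 * (alpha + s)) * `|v - u| <= coord_cost alpha v - coord_cost alpha u.
Proof.
move=> alpha_gt0 us; rewrite /coord_cost; set w := v - u.
have sqr_gap : v ^+ 2 - u ^+ 2 = 2 * (u * w) + w ^+ 2 by rewrite /w; ring.
have u_le : `|u| <= `|v| + `|w| by rewrite (_ : u = v - w) ?ler_normB // /w; ring.
have cross : - (u * w) <= `|u| * `|w| by rewrite -normrM -normrN ler_norm.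
have cross_s : `|u| * `|w| <= s * `|w| by apply: ler_wpM2r.
have lin : 2 * alpha * (- `|w|) <= 2 * alpha * (`|v| - `|u|).
  by rewrite ler_pM2l ?mulr_gt0 //; lra.
have := sqr_ge0 w; lra.
Qed.

Lemma coord_cost_gap_off_support (R : realFieldType) (alpha a u v : R) :
  0 < alpha -> `|u| <= a ->
  2 * (alpha - a) * `|v - u| - 4 * alpha * `|u|
    <= coord_cost alpha v - coord_cost alpha u.
Proof.
move=> alpha_gt0 ua; rewrite /coord_cost; set w := v - u.
have sqr_gap : v ^+ 2 - u ^+ 2 = 2 * (u * w) + w ^+ 2 by rewrite /w; ring.
have w_le : `|w| <= `|v| + `|u| by apply: ler_normB.
have cross : - (u * w) <= `|u| * `|w| by rewrite -normrM -normrN ler_norm.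
have cross_a : `|u| * `|w| <= a * `|w| by apply: ler_wpM2r.
have lin : 2 * alpha * (`|w| - 2 * `|u|) <= 2 * alpha * (`|v| - `|u|).
  by rewrite ler_pM2l ?mulr_gt0 //; lra.
have := sqr_ge0 w; lra.
Qed.

Section ConeConstraint.
Context {R : rcfType} {n : nat} {alpha : R}.
Hypothesis alpha_gt0 : 0 < alpha.

Lemma P2_obj_scaled (x : 'cV[R]_n) :
  2 * alpha * P2_obj alpha x = \sum_i coord_cost alpha (x i 0).
Proof.
rewrite /P2_obj norm2_sqr /norm1 mulrDr mulrA mulfV ?mulf_neq0 ?gt_eqF //.
by rewrite mul1r big_split /= mulr_sumr.
Qed.

Lemma P2_cone_constraint (S : {set 'I_n}) (s a : R) (x y : 'cV[R]_n) :
  (forall i, i \in S -> `|x i 0| <= s) ->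
  (forall i, i \in ~: S -> `|x i 0| <= a) ->
  P2_obj alpha y <= P2_obj alpha x ->
  (alpha - a) * norm1 (restrict (~: S) (y - x))
    <= (alpha + s) * norm1 (restrict S (y - x)) + 2 * alpha * norm1 (restrict (~: S) x).
Proof.
move=> x_le_s x_le_a y_le.
have cost_le : \sum_i (coord_cost alpha (y i 0) - coord_cost alpha (x i 0)) <= 0.
  rewrite sumrB -!P2_obj_scaled subr_le0.
  by rewrite ler_pM2l ?mulr_gt0.
have on_S : - (2 * (alpha + s)) * norm1 (restrict S (y - x))
    <= \sum_(i in S) (coord_cost alpha (y i 0) - coord_cost alpha (x i 0)).
  rewrite norm1_restrict mulr_sumr; apply: ler_sum => i iS.
  by rewrite !mxE; apply: coord_cost_gap_support => //; apply: x_le_s.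
have off_S : 2 * (alpha - a) * norm1 (restrict (~: S) (y - x))
      - 4 * alpha * norm1 (restrict (~: S) x)
    <= \sum_(i in ~: S) (coord_cost alpha (y i 0) - coord_cost alpha (x i 0)).
  rewrite !norm1_restrict !mulr_sumr -sumrB; apply: ler_sum => i iZ.
  by rewrite !mxE; apply: coord_cost_gap_off_support => //; apply: x_le_a.
move: cost_le; rewrite (sum_setC_split S); lra.
Qed.

Lemma P2_cone_constraint_ratio (S : {set 'I_n}) (s a : R) (x y : 'cV[R]_n) :
  a < alpha ->
  (forall i, i \in S -> `|x i 0| <= s) ->
  (forall i, i \in ~: S -> `|x i 0| <= a) ->
  P2_obj alpha y <= P2_obj alpha x ->
  norm1 (restrict (~: S) (y - x))
    <= (alpha + s) / (alpha - a) * norm1 (restrict S (y - x))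
       + 2 * alpha / (alpha - a) * norm1 (restrict (~: S) x).
Proof.
move=> a_lt_alpha x_le_s x_le_a y_le.
have gap_gt0 : 0 < alpha - a by rewrite subr_gt0.
set HS := norm1 (restrict S (y - x)); set XZ := norm1 (restrict (~: S) x).
rewrite -(ler_pM2l gap_gt0).
have -> : (alpha - a) * ((alpha + s) / (alpha - a) * HS + 2 * alpha / (alpha - a) * XZ)
    = (alpha + s) * HS + 2 * alpha * XZ by field; rewrite gt_eqF.
exact: P2_cone_constraint.
Qed.

End ConeConstraint.

(* The measurement condition m >= 4 c^2 k Delta turns the squared
   null-space bound (m / Delta) u^2 <= k N^2 into 2 c u <= N. *)
Lemma support_share_bound {R : realFieldType} {m k : nat} {Delta c u N : R} :
  (0 < m)%N -> 0 < Delta -> 0 <= c -> 0 <= u -> 0 <= N ->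
  4 * c ^+ 2 * k%:R * Delta <= m%:R ->
  m%:R / Delta * u ^+ 2 <= k%:R * N ^+ 2 ->
  2 * c * u <= N.
Proof.
move=> m_gt0 Delta_gt0 c0 u0 N0 m_large nsp.
have m_u2 : m%:R * u ^+ 2 <= k%:R * Delta * N ^+ 2.
  have -> : m%:R * u ^+ 2 = Delta * (m%:R / Delta * u ^+ 2).
    by field; rewrite gt_eqF.
  by rewrite [k%:R * Delta]mulrC -[leRHS]mulrA ler_pM2l.
have [k0|k_neq0] := eqVneq k 0%N.
  move: m_u2; rewrite k0 !mul0r => m_u2.
  have u2_le0 : u ^+ 2 <= 0 by rewrite -(ler_pM2l (_ : 0 < m%:R :> R)) ?ltr0n ?mulr0.
  have -> : u = 0 by apply/eqP; rewrite -sqrf_eq0 eq_le u2_le0 sqr_ge0.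
  by rewrite mulr0.
have kD_gt0 : 0 < k%:R * Delta by rewrite mulr_gt0 // ltr0n lt0n.
rewrite -ler_sqr ?nnegrE ?mulr_ge0 // -(ler_pM2l kD_gt0).
apply: le_trans m_u2.
have -> : k%:R * Delta * (2 * c * u) ^+ 2 = 4 * c ^+ 2 * k%:R * Delta * u ^+ 2 by ring.
by rewrite ler_wpM2r ?sqr_ge0.
Qed.

Theorem mainTheorem6 (R : rcfType) (m n k : nat) (A : 'M[R]_(m, n)) (Delta : R)
  (x0 : 'cV[R]_n) (S : {set 'I_n}) (alpha : R) (xstar : 'cV[R]_n) :
  (0 < m)%N -> (m < n)%N ->
  0 < Delta ->
  (forall h : 'cV[R]_n, A *m h = 0 -> h != 0 ->
     Num.sqrt (m%:R / Delta) * norm2 h <= norm1 h) ->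
  largest_k_support k x0 S ->
  normInf (restrict (~: S) x0) < alpha ->
  let C3 := (alpha + normInf (restrict S x0)) / (alpha - normInf (restrict (~: S) x0)) in
  let C4 := (2 * alpha) / (alpha - normInf (restrict (~: S) x0)) in
  4 * (1 + C3) ^+ 2 * k%:R * Delta <= m%:R ->
  is_P2_solution A (A *m x0) alpha xstar ->
  norm1 (xstar - x0) <= 4 * C4 * norm1 (restrict (~: S) x0).
Proof.
move=> m_gt0 _ Delta_gt0 nsp [cardS _] a_lt_alpha C3 C4 m_large [Axstar xstar_min].
set h := xstar - x0.
have alpha_gt0 : 0 < alpha := le_lt_trans (normInf_ge0 _) a_lt_alpha.
have gap_ge0 : 0 <= alpha - normInf (restrict (~: S) x0) by rewrite subr_ge0 ltW.
have C3_ge0 : 0 <= C3 by apply: divr_ge0 => //; rewrite addr_ge0 ?normInf_ge0 ?ltW.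
have C4_ge0 : 0 <= C4 by apply: divr_ge0 => //; rewrite mulr_ge0 ?ltW.
have XZ_ge0 : 0 <= norm1 (restrict (~: S) x0) by rewrite sumr_ge0.
have HS_ge0 : 0 <= norm1 (restrict S h) by rewrite sumr_ge0.
(* optimality of xstar against the feasible point x0 *)
have cone : norm1 (restrict (~: S) h)
    <= C3 * norm1 (restrict S h) + C4 * norm1 (restrict (~: S) x0).
  exact: P2_cone_constraint_ratio a_lt_alpha (restrict_coord_le S x0)
    (restrict_coord_le (~: S) x0) (xstar_min x0 erefl).
have share : 2 * (1 + C3) * norm1 (restrict S h) <= norm1 h.
  have Ah : A *m h = 0 by rewrite mulmxBr Axstar subrr.
  apply: (support_share_bound m_gt0 Delta_gt0 _ HS_ge0 _ m_large).
  - by rewrite addr_ge0.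
  - by rewrite sumr_ge0.
  rewrite -cardS; apply: null_space_support_bound (nsp h Ah).
  by rewrite divr_ge0 ?ler0n ?ltW.
(* ||h||_1 <= (1 + C3) ||h_S||_1 + C4 ||x0_Z||_1 <= ||h||_1 / 2 + C4 ||x0_Z||_1 *)
move: share; rewrite (norm1_split S h) => share.
have := mulr_ge0 C4_ge0 XZ_ge0; lra.
Qed.
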